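(* Consider the asynchronous network Newton method described in the context with $0<\varepsilon\le1$, let $t\ge1$, and set $Q(t-1)=\big(D(t-1)^{-1/2}BD(t-1)^{-1/2}\big)^2$. Then for any $y\in\mathbb{R}^n$ that is $\mathcal{F}_{t-1}$-measurable, $$\mathbb{E}\Big[\big\|\big(I-\varepsilon\Phi(t)+\varepsilon\Phi(t)Q(t-1)\big)y\big\|\;\Big|\;\mathcal{F}_{t-1}\Big]\le\Gamma_2\|y\|,\qquad \Gamma_2=\left(\frac{n-1+(1-\varepsilon+\varepsilon\rho^2)^2}{n}\right)^{1/2}<1 .$$
   Context: Setup. Let $n\ge 1$ be the number of agents and $\alpha>0$ a scalar. $W\in\mathbb{R}^{n\times n}$ is a symmetric nonnegative matrix with $W\mathbb{1}=\mathbb{1}$ (where $\mathbb{1}$ is the all-ones vector), $\mathrm{null}(I-W)=\mathrm{span}\{\mathbb{1}\}$, $0\le W_{ij}<1$ for all $i,j$, and $\delta\le W_{ii}\le\Delta$ for all $i$, for constants $0<\delta\le\Delta<1$. Each $f_i:\mathbb{R}\to\mathbb{R}$ is twice continuously differentiable with $0<m\le f_i''(s)\le M<\infty$ for all $s$ and $|f_i''(a)-f_i''(b)|\le L|a-b|$ for all $a,b$. Define $F(x)=\frac12 x^T(I-W)x+\alpha\sum_{i=1}^n f_i(x_i)$ for $x\in\mathbb{R}^n$, with minimum value $F^*$ and minimizer $x^*$. Let $g(x)=\nabla F(x)$, $G(x)=\mathrm{diag}(f_1''(x_1),\dots,f_n''(x_n))$, $H(x)=\nabla^2F(x)=I-W+\alpha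 G(x)$. Let $W_d$ be the diagonal matrix with $[W_d]_{ii}=W_{ii}$, and set $D(x)=\alpha G(x)+2(I-W_d)$ (diagonal, positive definite) and $B=I-2W_d+W$, so $H(x)=D(x)-B$. Define the approximate Hessian inverse $\hat H(x)^{-1}=D(x)^{-1/2}\big(I+D(x)^{-1/2}BD(x)^{-1/2}\big)D(x)^{-1/2}$. Constants: $\rho=\frac{2(1-\delta)}{2(1-\delta)+\alpha m}$, $\Lambda=\frac{1+\rho}{2(1-\Delta)+\alpha m}$, $\lambda=\frac{1}{2(1-\delta)+\alpha M}$. Algorithm (asynchronous network Newton). Given $x(0)\in\mathbb{R}^n$ and stepsize $\varepsilon>0$, let $\Phi(1),\Phi(2),\dots$ be i.i.d. random diagonal $n\times n$ matrices, each equal to $e_ie_i^T$ (the matrix with a single $1$ in position $(i,i)$ and zeros elsewhere) with probability $1/n$ for each $i=1,\dots,n$ (i.e., one uniformly random agent is active per iteration). The iterates are $x(t)=x(t-1)-\varepsilon\,\Phi(t)\hat H(x(t-1))^{-1}g(x(t-1))$, $t\ge1$. Write $g(t)=g(x(t))$, $D(t)=D(x(t))$, $H(t)=H(x(t))$, $\hat H(t)^{-1}=\hat H(x(t))^{-1}$. $\mathcal{F}_t$ denotes the $\sigma$-field generated by $\Phi(1),\dots,\Phi(t)$ (so $x(t)$ is $\mathcal{F}_t$-measurable). *)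

(* Stdlib Reals (derivatives of the f_i are needed). Vectors in R^n are
   functions nat -> R (entries 0..n-1 used), n x n matrices are nat -> nat -> R.
   Agents are indexed 0..n-1. *)
From Stdlib Require Import Reals Lra Lia Arith Bool.
Open Scope R_scope.

Definition vec := nat -> R.
Definition mat := nat -> nat -> R.

Fixpoint sumn (n : nat) (f : nat -> R) : R :=
  match n with O => 0 | S k => sumn k f + f k end.

Definition kron (i j : nat) : R := if Nat.eqb i j then 1 else 0.
Definition idm : mat := fun i j => kron i j.
Definition diagm (d : vec) : mat := fun i j => if Nat.eqb i j then d i else 0.
Definition madd (A B : mat) : mat := fun i j => A i j + B i j.
Definition msub (A B : mat) : mat := fun i j => A i j - B i j.
Definition mscal (c : R) (A : mat) : mat := fun i j => c * A i j.
Definition mmul (n : nat) (A B : mat) : mat :=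
  fun i j => sumn n (fun k => A i k * B k j).
Definition mvec (n : nat) (A : mat) (v : vec) : vec :=
  fun i => sumn n (fun j => A i j * v j).
Definition vsub (u v : vec) : vec := fun i => u i - v i.
Definition vscal (c : R) (v : vec) : vec := fun i => c * v i.
Definition vnorm (n : nat) (v : vec) : R := sqrt (sumn n (fun i => v i ^ 2)).

Definition Phi (i : nat) : mat := fun a b => if andb (Nat.eqb a i) (Nat.eqb b i) then 1 else 0.

Section Model.
Variables (n : nat) (W : mat) (alpha : R) (f1 f2 : nat -> R -> R).
(* f1 i = f_i', f2 i = f_i'' *)

(* D(x) = alpha G(x) + 2 (I - W_d) *)
Definition Dd (x : vec) : vec := fun i => alpha * f2 i (x i) + 2 * (1 - W i i).
Definition Dmhalf (x : vec) : mat := diagm (fun i => / sqrt (Dd x i)).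
Definition Bm : mat := fun i j => kron i j - 2 * (kron i j * W i i) + W i j.
Definition Cm (x : vec) : mat := mmul n (Dmhalf x) (mmul n Bm (Dmhalf x)).
Definition Qm (x : vec) : mat := mmul n (Cm x) (Cm x).
Definition Hhatinv (x : vec) : mat :=
  mmul n (Dmhalf x) (mmul n (madd idm (Cm x)) (Dmhalf x)).
Definition grad (x : vec) : vec :=
  fun i => x i - sumn n (fun j => W i j * x j) + alpha * f1 i (x i).

(* Sample path: omega s is the agent active at iteration s (s >= 1),
   i.e. Phi(s) = Phi (omega s). *)
Fixpoint iterate (eps : R) (x0 : vec) (omega : nat -> nat) (t : nat) : vec :=
  match t with
  | O => x0
  | S k => let xk := iterate eps x0 omega k in
           vsub xk (vscal eps (mvec n (Phi (omega (S k)))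
                                 (mvec n (Hhatinv xk) (grad xk))))
  end.
End Model.

Definition valid_path (n : nat) (omega : nat -> nat) : Prop :=
  forall s, (omega s < n)%nat.

(* A random vector on paths is F_k-measurable iff it only depends on
   Phi(1),...,Phi(k). *)
Definition F_measurable (n k : nat) (y : (nat -> nat) -> vec) : Prop :=
  forall om om', valid_path n om -> valid_path n om' ->
    (forall s, (1 <= s <= k)%nat -> om s = om' s) -> y om = y om'.

Definition upd (omega : nat -> nat) (t i : nat) : nat -> nat :=
  fun s => if Nat.eqb s t then i else omega s.

(* E[ Z | F_{t-1} ](omega), for Z depending on Phi(1..t): Phi(t) is uniform on
   {e_i e_i^T} and independent of F_{t-1}. *)
Definition condexp (n t : nat) (Z : (nat -> nat) -> R) (omega : nat -> nat) : R :=
  / INR n * sumn n (fun i => Z (upd omega t i)).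

(* Conditionally on F_{t-1}, only the active agent i is random, and the step
   changes y only in coordinate i, replacing y_i by w_i where
   w = ((1 - eps) I + eps Q) y.  Hence the average over i of the squared norms
   is ((n - 1) |y|^2 + |w|^2) / n.  The matrix C = D^{-1/2} B D^{-1/2} is
   symmetric, entrywise nonnegative, and C p <= rho p for p = D^{1/2} 1 (the
   rows of B sum to 2 (1 - W_ii)), so the Schur test gives |C| <= rho; as
   Q = C^2 with C symmetric, <y, Q y> = |C y|^2 and |w| <= (1 - eps + eps rho^2) |y|.
   Jensen's inequality (the mean of the norms is at most the root mean square)
   concludes. *)
From Stdlib Require Import Reals Lra Lia Psatz.
Open Scope R_scope.

Lemma sumn_ext n f g :
  (forall k, (k < n)%nat -> f k = g k) -> sumn n f = sumn n g.
Proof.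
  induction n; simpl; intros H; [reflexivity|].
  rewrite IHn by (intros; apply H; lia). rewrite H by lia. reflexivity.
Qed.

Lemma sumn_add n f g : sumn n (fun k => f k + g k) = sumn n f + sumn n g.
Proof. induction n; simpl; [lra|]. rewrite IHn; lra. Qed.

Lemma sumn_scal n c f : sumn n (fun k => c * f k) = c * sumn n f.
Proof. induction n; simpl; [lra|]. rewrite IHn; lra. Qed.

Lemma sumn_const n c : sumn n (fun _ => c) = INR n * c.
Proof. induction n; simpl sumn; [simpl; lra|]. rewrite IHn, S_INR; lra. Qed.

Lemma sumn_0 n : sumn n (fun _ => 0) = 0.
Proof. rewrite sumn_const; ring. Qed.

Lemma sumn_le n f g :
  (forall k, (k < n)%nat -> f k <= g k) -> sumn n f <= sumn n g.
Proof.
  induction n; simpl; intros H; [lra|].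
  assert (sumn n f <= sumn n g) by (apply IHn; intros; apply H; lia).
  specialize (H n ltac:(lia)). lra.
Qed.

Lemma sumn_nonneg n f : (forall k, (k < n)%nat -> 0 <= f k) -> 0 <= sumn n f.
Proof. intros H. rewrite <- (sumn_0 n). apply sumn_le; auto. Qed.

Lemma sumn_swap n p (f : nat -> nat -> R) :
  sumn n (fun i => sumn p (fun j => f i j)) = sumn p (fun j => sumn n (fun i => f i j)).
Proof.
  induction n; simpl.
  - rewrite sumn_0; reflexivity.
  - rewrite IHn, <- sumn_add. reflexivity.
Qed.

Lemma sumn_eqb n i g : (i < n)%nat ->
  sumn n (fun k => if Nat.eqb k i then g k else 0) = g i.
Proof.
  induction n; intros Hi; [lia|]. simpl.
  destruct (Nat.eq_dec i n) as [->|Hne].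
  - rewrite Nat.eqb_refl, (sumn_ext n _ (fun _ => 0)), sumn_0; [lra|].
    intros k Hk. destruct (Nat.eqb_spec k n); [lia|reflexivity].
  - rewrite IHn by lia. destruct (Nat.eqb_spec n i); [lia|lra].
Qed.

Lemma sumn_weighted_cauchy_schwarz n b u :
  (forall k, (k < n)%nat -> 0 <= b k) ->
  (sumn n (fun k => b k * u k)) ^ 2 <= sumn n b * sumn n (fun k => b k * u k ^ 2).
Proof.
  induction n; intros Hb; cbn [sumn]; [nra|].
  assert (IH := IHn ltac:(intros; apply Hb; lia)).
  assert (Hbn := Hb n ltac:(lia)).
  set (x := u n) in *.
  (* the new cross terms are controlled by the weighted variance around x *)
  assert (Hvar : 0 <= sumn n (fun k => b k * (u k - x) ^ 2)).
  { apply sumn_nonneg. intros k Hk. apply Rmult_le_pos; [apply Hb; lia|apply pow2_ge_0]. }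
  rewrite (sumn_ext n _ (fun k => b k * u k ^ 2 + ((-2 * x) * (b k * u k) + x ^ 2 * b k)))
    in Hvar by (intros; ring).
  rewrite !sumn_add, !sumn_scal in Hvar.
  set (B := sumn n b) in *. set (U1 := sumn n (fun k => b k * u k)) in *.
  set (U2 := sumn n (fun k => b k * u k ^ 2)) in *.
  assert (0 <= b n * (U2 + (-2 * x * U1 + x ^ 2 * B))) by (apply Rmult_le_pos; lra).
  nra.
Qed.

Lemma mean_le_sqrt_mean_sq n u : (1 <= n)%nat ->
  (forall k, (k < n)%nat -> 0 <= u k) ->
  / INR n * sumn n u <= sqrt (sumn n (fun k => u k ^ 2) / INR n).
Proof.
  intros Hn Hu.
  assert (HnR : 1 <= INR n) by (apply (le_INR 1); lia).
  assert (HS : 0 <= sumn n u) by (apply sumn_nonneg; auto).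
  assert (HCS := sumn_weighted_cauchy_schwarz n (fun _ => 1) u ltac:(intros; lra)).
  rewrite sumn_const, (sumn_ext n _ u), (sumn_ext n (fun k => 1 * u k ^ 2) (fun k => u k ^ 2))
    in HCS by (intros; ring).
  rewrite <- (sqrt_pow2 (/ INR n * sumn n u)).
  2:{ apply Rmult_le_pos; [left; apply Rinv_0_lt_compat; lra|auto]. }
  apply sqrt_le_1_alt.
  replace ((/ INR n * sumn n u) ^ 2) with ((sumn n u) ^ 2 / INR n / INR n) by (field; lra).
  unfold Rdiv. apply Rmult_le_compat_r; [left; apply Rinv_0_lt_compat; lra|].
  apply (Rmult_le_reg_r (INR n)); [lra|].
  rewrite Rmult_assoc, Rinv_l by lra. lra.
Qed.

Definition sqnorm n (v : vec) : R := sumn n (fun i => v i ^ 2).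

Lemma sqnorm_nonneg n v : 0 <= sqnorm n v.
Proof. apply sumn_nonneg; intros; apply pow2_ge_0. Qed.

Lemma vnorm_pow2 n v : vnorm n v ^ 2 = sqnorm n v.
Proof. apply pow2_sqrt, sqnorm_nonneg. Qed.

Definition vadd_unit (v : vec) (i : nat) (e : R) : vec :=
  fun j => v j + (if Nat.eqb j i then e else 0).

Lemma sqnorm_vadd_unit n v i e : (i < n)%nat ->
  sqnorm n (vadd_unit v i e) = sqnorm n v - v i ^ 2 + (v i + e) ^ 2.
Proof.
  intros Hi. unfold sqnorm, vadd_unit.
  rewrite (sumn_ext n _ (fun j => v j ^ 2 + (if Nat.eqb j i then 2 * v j * e + e ^ 2 else 0))).
  - rewrite sumn_add, (sumn_eqb n i (fun j => 2 * v j * e + e ^ 2)) by auto. ring.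
  - intros j Hj. destruct (Nat.eqb j i); ring.
Qed.

Lemma mvec_mmul n A B v i : mvec n (mmul n A B) v i = mvec n A (mvec n B v) i.
Proof.
  unfold mvec, mmul.
  transitivity (sumn n (fun j => sumn n (fun k => A i k * B k j * v j))).
  { apply sumn_ext; intros j Hj. rewrite Rmult_comm, <- sumn_scal.
    apply sumn_ext; intros; ring. }
  rewrite sumn_swap. apply sumn_ext; intros k Hk.
  rewrite <- sumn_scal. apply sumn_ext; intros; ring.
Qed.

Lemma sumn_mul_mvec_sym n (C : mat) (u v : vec) :
  (forall i j, (i < n)%nat -> (j < n)%nat -> C i j = C j i) ->
  sumn n (fun i => u i * mvec n C v i) = sumn n (fun i => mvec n C u i * v i).
Proof.
  intros HC. unfold mvec.
  transitivity (sumn n (fun i => sumn n (fun j => u i * C i j * v j))).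
  { apply sumn_ext; intros i Hi. rewrite <- sumn_scal. apply sumn_ext; intros; ring. }
  rewrite sumn_swap. apply sumn_ext; intros j Hj.
  rewrite Rmult_comm, <- sumn_scal. apply sumn_ext; intros i Hi.
  rewrite (HC i j) by auto. ring.
Qed.

Lemma mmul_diagm_l n d (A : mat) i j : (i < n)%nat ->
  mmul n (diagm d) A i j = d i * A i j.
Proof.
  intros Hi. unfold mmul, diagm.
  rewrite <- (sumn_eqb n i (fun k => d i * A k j)) by auto.
  apply sumn_ext; intros k Hk.
  destruct (Nat.eqb_spec i k), (Nat.eqb_spec k i); subst; try lia; ring.
Qed.

Lemma mmul_diagm_r n d (A : mat) i j : (j < n)%nat ->
  mmul n A (diagm d) i j = A i j * d j.
Proof.
  intros Hj. unfold mmul, diagm.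
  rewrite <- (sumn_eqb n j (fun k => A i k * d k)) by auto.
  apply sumn_ext; intros k Hk. destruct (Nat.eqb_spec k j); subst; ring.
Qed.

Lemma sqnorm_mvec_schur n (C : mat) (p : vec) rho :
  0 <= rho ->
  (forall i j, (i < n)%nat -> (j < n)%nat -> 0 <= C i j) ->
  (forall i j, (i < n)%nat -> (j < n)%nat -> C i j = C j i) ->
  (forall i, (i < n)%nat -> 0 < p i) ->
  (forall i, (i < n)%nat -> sumn n (fun j => C i j * p j) <= rho * p i) ->
  forall v, sqnorm n (mvec n C v) <= rho ^ 2 * sqnorm n v.
Proof.
  intros Hrho Hnn Hsym Hp Hrow v. unfold sqnorm, mvec.
  assert (Hq : forall j, (j < n)%nat -> 0 <= v j ^ 2 / p j).
  { intros j Hj. apply Rmult_le_pos; [apply pow2_ge_0|left; apply Rinv_0_lt_compat; auto]. }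
  (* Cauchy-Schwarz in each row with the weights C i j * p j *)
  apply Rle_trans with (sumn n (fun i => rho * p i * sumn n (fun j => C i j * (v j ^ 2 / p j)))).
  - apply sumn_le. intros i Hi.
    rewrite (sumn_ext n (fun j => C i j * v j) (fun j => C i j * p j * (v j / p j)))
      by (intros j Hj; field; apply Rgt_not_eq, Hp; auto).
    eapply Rle_trans.
    { apply (sumn_weighted_cauchy_schwarz n (fun j => C i j * p j) (fun j => v j / p j)).
      intros j Hj. apply Rmult_le_pos; [auto|left; auto]. }
    rewrite (sumn_ext n (fun j => C i j * p j * (v j / p j) ^ 2) (fun j => C i j * (v j ^ 2 / p j)))
      by (intros j Hj; field; apply Rgt_not_eq, Hp; auto).
    apply Rmult_le_compat_r; [|apply Hrow; auto].
    apply sumn_nonneg. intros j Hj. apply Rmult_le_pos; auto.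
  - rewrite (sumn_ext n _ (fun i => sumn n (fun j => rho * (p i * C i j * (v j ^ 2 / p j)))))
      by (intros i Hi; rewrite <- sumn_scal; apply sumn_ext; intros; ring).
    rewrite sumn_swap, <- sumn_scal.
    apply sumn_le. intros j Hj.
    rewrite (sumn_ext n _ (fun i => rho * (v j ^ 2 / p j) * (C j i * p i)))
      by (intros i Hi; rewrite (Hsym i j) by auto; ring).
    rewrite sumn_scal.
    apply Rle_trans with (rho * (v j ^ 2 / p j) * (rho * p j)).
    + apply Rmult_le_compat_l; [apply Rmult_le_pos; auto|apply Hrow; auto].
    + right; field. apply Rgt_not_eq, Hp; auto.
Qed.

Lemma sqnorm_relax_sq_le n (C : mat) rho eps (y : vec) :
  0 <= rho -> 0 <= eps <= 1 ->
  (forall i j, (i < n)%nat -> (j < n)%nat -> C i j = C j i) ->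
  (forall v, sqnorm n (mvec n C v) <= rho ^ 2 * sqnorm n v) ->
  sqnorm n (fun i => (1 - eps) * y i + eps * mvec n (mmul n C C) y i)
  <= (1 - eps + eps * rho ^ 2) ^ 2 * sqnorm n y.
Proof.
  intros Hrho Heps Hsym HC.
  set (Cy := mvec n C y).
  assert (HQ : forall i, mvec n (mmul n C C) y i = mvec n C Cy i) by (intros; apply mvec_mmul).
  assert (Hdot : sumn n (fun i => y i * mvec n C Cy i) = sqnorm n Cy).
  { rewrite sumn_mul_mvec_sym by auto. apply sumn_ext; intros; fold Cy; ring. }
  assert (HCy : sqnorm n Cy <= rho ^ 2 * sqnorm n y) by apply HC.
  assert (HCCy : sqnorm n (mvec n C Cy) <= rho ^ 2 * sqnorm n Cy) by apply HC.
  assert (Hy := sqnorm_nonneg n y).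
  assert (Hexp : sqnorm n (fun i => (1 - eps) * y i + eps * mvec n (mmul n C C) y i)
    = (1 - eps) ^ 2 * sqnorm n y + 2 * (1 - eps) * eps * sqnorm n Cy
      + eps ^ 2 * sqnorm n (mvec n C Cy)).
  { rewrite <- Hdot. unfold sqnorm. rewrite <- !sumn_scal, <- !sumn_add.
    apply sumn_ext; intros i Hi. rewrite HQ. ring. }
  rewrite Hexp.
  assert (0 <= 2 * (1 - eps) * eps) by nra.
  assert (2 * (1 - eps) * eps * sqnorm n Cy <= 2 * (1 - eps) * eps * (rho ^ 2 * sqnorm n y))
    by (apply Rmult_le_compat_l; auto).
  assert (eps ^ 2 * sqnorm n (mvec n C Cy) <= eps ^ 2 * (rho ^ 2 * (rho ^ 2 * sqnorm n y))).
  { apply Rmult_le_compat_l; [nra|]. eapply Rle_trans; [apply HCCy|].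
    apply Rmult_le_compat_l; [nra|auto]. }
  nra.
Qed.

Lemma mean_vnorm_vadd_unit_le n (C : mat) rho eps (y : vec) :
  (1 <= n)%nat -> 0 <= rho -> 0 <= eps <= 1 ->
  (forall i j, (i < n)%nat -> (j < n)%nat -> C i j = C j i) ->
  (forall v, sqnorm n (mvec n C v) <= rho ^ 2 * sqnorm n v) ->
  / INR n * sumn n (fun i => vnorm n (vadd_unit y i (eps * (mvec n (mmul n C C) y i - y i))))
  <= sqrt ((INR n - 1 + (1 - eps + eps * rho ^ 2) ^ 2) / INR n) * vnorm n y.
Proof.
  intros Hn Hrho Heps Hsym HC.
  assert (HnR : 1 <= INR n) by (apply (le_INR 1); lia).
  set (c := 1 - eps + eps * rho ^ 2).
  set (w := fun i => (1 - eps) * y i + eps * mvec n (mmul n C C) y i).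
  assert (Hw : sqnorm n w <= c ^ 2 * sqnorm n y) by (apply sqnorm_relax_sq_le; auto).
  assert (Hsq : sumn n (fun i => vnorm n (vadd_unit y i (eps * (mvec n (mmul n C C) y i - y i))) ^ 2)
                = INR n * sqnorm n y - sqnorm n y + sqnorm n w).
  { rewrite (sumn_ext n _ (fun i => sqnorm n y + (-1 * y i ^ 2 + w i ^ 2))).
    - rewrite !sumn_add, sumn_const, sumn_scal. unfold sqnorm. ring.
    - intros i Hi. rewrite vnorm_pow2, sqnorm_vadd_unit by auto. unfold w. ring. }
  eapply Rle_trans; [apply mean_le_sqrt_mean_sq; auto; intros; apply sqrt_pos|].
  unfold vnorm at 2. fold (sqnorm n y).
  rewrite Hsq, <- sqrt_mult_alt.
  2:{ apply Rmult_le_pos; [nra|left; apply Rinv_0_lt_compat; lra]. }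
  apply sqrt_le_1_alt. unfold Rdiv.
  apply Rle_trans with ((INR n - 1 + c ^ 2) * sqnorm n y * / INR n); [|right; ring].
  apply Rmult_le_compat_r; [left; apply Rinv_0_lt_compat; lra|]. nra.
Qed.

Section ScaledNetworkMatrix.

Variables (n : nat) (W : mat) (alpha delta m : R) (f2 : nat -> R -> R).
Hypothesis Halpha : 0 < alpha.
Hypothesis Hm : 0 < m.
Hypothesis HWsym : forall i j, (i < n)%nat -> (j < n)%nat -> W i j = W j i.
Hypothesis HWnn : forall i j, (i < n)%nat -> (j < n)%nat -> 0 <= W i j.
Hypothesis HWrow : forall i, (i < n)%nat -> sumn n (fun j => W i j) = 1.
Hypothesis HWdiag : forall i, (i < n)%nat -> delta <= W i i < 1.
Hypothesis Hf2 : forall i s, (i < n)%nat -> m <= f2 i s.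

Lemma Bm_sym i j : (i < n)%nat -> (j < n)%nat -> Bm W i j = Bm W j i.
Proof.
  intros Hi Hj. unfold Bm, kron. rewrite (HWsym i j) by auto.
  destruct (Nat.eqb_spec i j), (Nat.eqb_spec j i); subst; try lia; lra.
Qed.

Lemma Bm_nonneg i j : (i < n)%nat -> (j < n)%nat -> 0 <= Bm W i j.
Proof.
  intros Hi Hj. specialize (HWnn i j Hi Hj). specialize (HWdiag i Hi).
  unfold Bm, kron. destruct (Nat.eqb_spec i j); subst; lra.
Qed.

Lemma Bm_row_sum i : (i < n)%nat -> sumn n (fun j => Bm W i j) = 2 * (1 - W i i).
Proof.
  intros Hi. unfold Bm.
  rewrite (sumn_ext n _ (fun j => (if Nat.eqb j i then 1 - 2 * W i i else 0) + W i j)).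
  - rewrite sumn_add, HWrow, (sumn_eqb n i (fun _ => 1 - 2 * W i i)) by auto. ring.
  - intros j Hj. unfold kron.
    destruct (Nat.eqb_spec i j), (Nat.eqb_spec j i); subst; try lia; ring.
Qed.

Lemma Dd_pos x i : (i < n)%nat -> 0 < Dd W alpha f2 x i.
Proof.
  intros Hi. specialize (Hf2 i (x i) Hi). specialize (HWdiag i Hi).
  unfold Dd. nra.
Qed.

Lemma Cm_entry x i j : (i < n)%nat -> (j < n)%nat ->
  Cm n W alpha f2 x i j
  = / sqrt (Dd W alpha f2 x i) * (Bm W i j * / sqrt (Dd W alpha f2 x j)).
Proof.
  intros Hi Hj. unfold Cm, Dmhalf.
  rewrite mmul_diagm_l, mmul_diagm_r by auto. reflexivity.
Qed.

Lemma Cm_sym x i j : (i < n)%nat -> (j < n)%nat -> Cm n W alpha f2 x i j = Cm n W alpha f2 x j i.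
Proof. intros Hi Hj. rewrite !Cm_entry, Bm_sym by auto. ring. Qed.

Lemma sqnorm_mvec_Cm_le x v :
  sqnorm n (mvec n (Cm n W alpha f2 x) v)
  <= (2 * (1 - delta) / (2 * (1 - delta) + alpha * m)) ^ 2 * sqnorm n v.
Proof.
  destruct (Nat.eq_dec n 0) as [->|Hn0]; [unfold sqnorm; simpl; lra|].
  assert (HW0 := HWdiag 0 ltac:(lia)).
  set (p := fun i => sqrt (Dd W alpha f2 x i)).
  assert (Hp : forall i, (i < n)%nat -> 0 < p i) by (intros; apply sqrt_lt_R0, Dd_pos; auto).
  set (K := 2 * (1 - delta) + alpha * m).
  assert (HK : 0 < K) by (unfold K; nra).
  apply sqnorm_mvec_schur with (p := p).
  - unfold Rdiv. apply Rmult_le_pos; [lra|left; apply Rinv_0_lt_compat; auto].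
  - intros i j Hi Hj. rewrite Cm_entry by auto. fold (p i) (p j).
    assert (0 <= Bm W i j) by (apply Bm_nonneg; auto).
    assert (0 < / p i) by (apply Rinv_0_lt_compat; auto).
    assert (0 < / p j) by (apply Rinv_0_lt_compat; auto).
    apply Rmult_le_pos; [lra|apply Rmult_le_pos; lra].
  - apply Cm_sym.
  - exact Hp.
  - intros i Hi.
    assert (Hpi := Hp i Hi).
    (* the rows of C p are B's row sums scaled by 1 / p i, and p i ^ 2 = D_i *)
    rewrite (sumn_ext n _ (fun j => / p i * Bm W i j)).
    2:{ intros j Hj. rewrite Cm_entry by auto. fold (p i) (p j).
        assert (Hpj := Hp j Hj). field. lra. }
    rewrite sumn_scal, Bm_row_sum by auto.
    apply (Rmult_le_reg_r (p i)); auto.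
    replace (/ p i * (2 * (1 - W i i)) * p i) with (2 * (1 - W i i)) by (field; lra).
    rewrite Rmult_assoc. unfold p. rewrite sqrt_sqrt by (left; apply Dd_pos; auto).
    assert (HWi := HWdiag i Hi). assert (Hfi := Hf2 i (x i) Hi).
    unfold Dd. fold K.
    apply (Rmult_le_reg_r K); auto.
    replace (2 * (1 - delta) / K * (alpha * f2 i (x i) + 2 * (1 - W i i)) * K)
      with (2 * (1 - delta) * (alpha * f2 i (x i) + 2 * (1 - W i i))) by (field; lra).
    assert (2 * (1 - W i i) * (alpha * m) <= 2 * (1 - delta) * (alpha * f2 i (x i)))
      by (apply Rmult_le_compat; nra).
    unfold K. nra.
Qed.

End ScaledNetworkMatrix.

Lemma iterate_ext_path n W alpha f1 f2 eps x0 k om om' :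
  (forall s, (1 <= s <= k)%nat -> om s = om' s) ->
  iterate n W alpha f1 f2 eps x0 om k = iterate n W alpha f1 f2 eps x0 om' k.
Proof.
  induction k; intros H; simpl; [reflexivity|].
  rewrite IHk by (intros; apply H; lia). rewrite H by lia. reflexivity.
Qed.

Lemma mvec_async_step n eps i (Q : mat) (v : vec) : (i < n)%nat ->
  forall j, (j < n)%nat ->
  mvec n (madd (msub idm (mscal eps (Phi i))) (mscal eps (mmul n (Phi i) Q))) v j
  = vadd_unit v i (eps * (mvec n Q v i - v i)) j.
Proof.
  intros Hi j Hj. unfold mvec, madd, msub, mscal, idm, vadd_unit.
  rewrite (sumn_ext n _ (fun k => (if Nat.eqb k j then v k else 0)
      + (if Nat.eqb j i then eps * (Q i k * v k) - eps * (if Nat.eqb k i then v k else 0) else 0))).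
  - rewrite sumn_add, sumn_eqb by auto.
    destruct (Nat.eqb j i).
    + rewrite (sumn_ext n _ (fun k => eps * (Q i k * v k) + (-eps) * (if Nat.eqb k i then v k else 0)))
        by (intros; ring).
      rewrite sumn_add, !sumn_scal, sumn_eqb by auto. ring.
    + rewrite sumn_0. ring.
  - intros k Hk. unfold mmul, Phi, kron.
    rewrite (sumn_ext n (fun l => _ * Q l k)
               (fun l => if Nat.eqb l i then (if Nat.eqb j i then Q l k else 0) else 0)).
    2:{ intros l Hl. destruct (Nat.eqb j i), (Nat.eqb l i); simpl; ring. }
    rewrite (sumn_eqb n i (fun l => if Nat.eqb j i then Q l k else 0)) by auto.
    destruct (Nat.eqb_spec j k), (Nat.eqb_spec k j), (Nat.eqb_spec j i), (Nat.eqb_spec k i);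
      subst; simpl; try lia; ring.
Qed.

(* Resampling the agent at step [t] leaves [x(t-1)] and the F_{t-1}-measurable
   [y] unchanged. *)
Lemma condexp_async_step_norm n W alpha f1 f2 eps x0 t (y : (nat -> nat) -> vec) omega :
  (1 <= t)%nat -> F_measurable n (t - 1) y -> valid_path n omega ->
  let Q := Qm n W alpha f2 (iterate n W alpha f1 f2 eps x0 omega (t - 1)) in
  condexp n t
    (fun om =>
       let xprev := iterate n W alpha f1 f2 eps x0 om (t - 1) in
       vnorm n (mvec n
                  (madd (msub idm (mscal eps (Phi (om t))))
                        (mscal eps (mmul n (Phi (om t)) (Qm n W alpha f2 xprev))))
                  (y om)))
    omega
  = / INR n * sumn n (fun i => vnorm n (vadd_unit (y omega) i
                                         (eps * (mvec n Q (y omega) i - y omega i)))).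
Proof.
  intros Ht Hy Hom Q. unfold condexp. f_equal. apply sumn_ext. intros i Hi.
  assert (Hpast : forall s, (1 <= s <= t - 1)%nat -> upd omega t i s = omega s).
  { intros s Hs. unfold upd. destruct (Nat.eqb_spec s t); [lia|reflexivity]. }
  assert (Hvalid : valid_path n (upd omega t i)).
  { intros s. unfold upd. destruct (Nat.eqb s t); auto. }
  cbv zeta. rewrite (iterate_ext_path _ _ _ _ _ _ _ _ _ omega Hpast).
  rewrite (Hy _ omega Hvalid Hom Hpast).
  assert (Hnow : upd omega t i t = i) by (unfold upd; rewrite Nat.eqb_refl; reflexivity).
  rewrite Hnow.
  unfold vnorm. f_equal. apply sumn_ext. intros j Hj.
  rewrite mvec_async_step by auto. reflexivity.
Qed.

Lemma Gamma2_lt_1 n eps rho : (1 <= n)%nat -> 0 < eps <= 1 -> 0 <= rho < 1 ->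
  sqrt ((INR n - 1 + (1 - eps + eps * rho ^ 2) ^ 2) / INR n) < 1.
Proof.
  intros Hn Heps Hrho.
  assert (HnR : 1 <= INR n) by (apply (le_INR 1); lia).
  assert (Hc : 0 <= 1 - eps + eps * rho ^ 2 < 1).
  { assert (0 < eps * (1 - rho ^ 2)) by (apply Rmult_lt_0_compat; nra). nra. }
  set (c := 1 - eps + eps * rho ^ 2) in *.
  assert (0 <= c ^ 2 < 1) by nra.
  apply Rlt_le_trans with (sqrt 1); [apply sqrt_lt_1_alt; split|rewrite sqrt_1; lra].
  - unfold Rdiv. apply Rmult_le_pos; [nra|left; apply Rinv_0_lt_compat; lra].
  - apply (Rmult_lt_reg_r (INR n)); [lra|].
    unfold Rdiv. rewrite Rmult_assoc, Rinv_l by lra. nra.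
Qed.

Theorem mainTheorem5
  (n : nat) (alpha delta Delta m M L eps : R)
  (W : mat) (f f1 f2 : nat -> R -> R) (x0 : vec)
  (Hn : (1 <= n)%nat) (Halpha : 0 < alpha)
  (HWsym : forall i j, (i < n)%nat -> (j < n)%nat -> W i j = W j i)
  (HWnn : forall i j, (i < n)%nat -> (j < n)%nat -> 0 <= W i j)
  (HWlt1 : forall i j, (i < n)%nat -> (j < n)%nat -> W i j < 1)
  (HWrow : forall i, (i < n)%nat -> sumn n (fun j => W i j) = 1)
  (HWnull : forall v : vec,
      (forall i, (i < n)%nat -> v i - sumn n (fun j => W i j * v j) = 0) ->
      exists c, forall i, (i < n)%nat -> v i = c)
  (Hdelta : 0 < delta) (HdD : delta <= Delta) (HDelta : Delta < 1)
  (HWdiag : forall i, (i < n)%nat -> delta <= W i i <= Delta)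
  (Hf1 : forall i s, (i < n)%nat -> derivable_pt_lim (f i) s (f1 i s))
  (Hf2 : forall i s, (i < n)%nat -> derivable_pt_lim (f1 i) s (f2 i s))
  (Hf2c : forall i, (i < n)%nat -> continuity (f2 i))
  (Hm : 0 < m) (HmM : forall i s, (i < n)%nat -> m <= f2 i s <= M)
  (HL : forall i a b, (i < n)%nat -> Rabs (f2 i a - f2 i b) <= L * Rabs (a - b))
  (Heps : 0 < eps <= 1)
  (t : nat) (Ht : (1 <= t)%nat)
  (y : (nat -> nat) -> vec) (Hy : F_measurable n (t - 1) y) :
  let rho := 2 * (1 - delta) / (2 * (1 - delta) + alpha * m) in
  let Gamma2 := sqrt ((INR n - 1 + (1 - eps + eps * rho ^ 2) ^ 2) / INR n) in
  (forall omega, valid_path n omega ->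
     condexp n t
       (fun om =>
          let xprev := iterate n W alpha f1 f2 eps x0 om (t - 1) in
          vnorm n (mvec n
                     (madd (msub idm (mscal eps (Phi (om t))))
                           (mscal eps (mmul n (Phi (om t)) (Qm n W alpha f2 xprev))))
                     (y om)))
       omega
     <= Gamma2 * vnorm n (y omega))
  /\ Gamma2 < 1.
Proof.
  intros rho Gamma2.
  assert (HK : 0 < 2 * (1 - delta) + alpha * m) by nra.
  assert (Hrho : 0 <= rho < 1).
  { unfold rho. split.
    - unfold Rdiv. apply Rmult_le_pos; [lra|left; apply Rinv_0_lt_compat; lra].
    - apply (Rmult_lt_reg_r (2 * (1 - delta) + alpha * m)); [lra|].
      unfold Rdiv. rewrite Rmult_assoc, Rinv_l by lra. nra. }
  assert (HWdiag' : forall i, (i < n)%nat -> delta <= W i i < 1).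
  { intros i Hi. specialize (HWdiag i Hi). lra. }
  split; [|apply Gamma2_lt_1; auto].
  intros omega Hom.
  rewrite condexp_async_step_norm by auto.
  apply mean_vnorm_vadd_unit_le; auto; try lra.
  - apply Cm_sym; auto.
  - intros v. apply (sqnorm_mvec_Cm_le n W alpha delta m f2); auto.
    intros i s Hi. apply HmM; auto.
Qed.
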